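(* Let $G$ be a finite nilpotent group. Then $G$ contains no word image impostor if and only if $G$ is an abelian group of prime exponent.
   Context: $F_d$ is the free group on $d$ letters; for $w\in F_d$, $w(G)$ is the image of the word map $G^d\to G$ given by evaluating $w$. A subset $A\subseteq G$ is a word image candidate if $1\in A$ and $\varphi(A)\subseteq A$ for every automorphism $\varphi$ of $G$. A word image impostor is a word image candidate $A$ such that $A\neq w(G)$ for every $d\ge1$ and every $w\in F_d$. *)

From HB Require Import structures.
From mathcomp Require Import all_boot all_order all_fingroup all_solvable.
Set Implicit Arguments. Unset Strict Implicit. Unset Printing Implicit Defensive.
Local Open Scope group_scope.

(* Elements of the free group F_d, presented as (not necessarily reduced)
   group terms over the d letters 'I_d.  Every element of F_d is represented,
   and the word map of a term only depends on the element of F_d it denotes. *)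
Inductive fword (d : nat) : Type :=
| FVar of 'I_d
| FOne
| FMul of fword d & fword d
| FInv of fword d.

Fixpoint weval (gT : finGroupType) (d : nat) (g : 'I_d -> gT) (w : fword d) : gT :=
  match w with
  | FVar i => g i
  | FOne => 1
  | FMul u v => weval g u * weval g v
  | FInv u => (weval g u)^-1
  end.

Definition word_image (gT : finGroupType) (G : {set gT}) (d : nat) (w : fword d)
  : {set gT} :=
  [set x | [exists g : {ffun 'I_d -> gT},
              [forall i, g i \in G] && (weval g w == x)]].

Definition word_image_candidate (gT : finGroupType) (G : {set gT}) (A : {set gT}) :=
  [/\ A \subset G, 1 \in A & forall a : {perm gT}, a \in Aut G -> a @: A \subset A].

Definition word_image_impostor (gT : finGroupType) (G : {set gT}) (A : {set gT}) :=
  word_image_candidate G A /\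
  forall (d : nat), (1 <= d)%N -> forall w : fword d, A != word_image G w.

From HB Require Import structures.
From mathcomp Require Import all_boot all_order all_fingroup all_solvable.
From mathcomp Require Import all_algebra mxabelem.
Set Implicit Arguments. Unset Strict Implicit. Unset Printing Implicit Defensive.
Import GRing.Theory.
Local Open Scope group_scope.

(* A word image is stable under every endomorphism of G, so a candidate that
   some endomorphism moves out of itself is an impostor.  If G is nilpotent and
   not abelian, a map G -> G/M ~= Z_p -> Z(G) sends a noncentral element to a
   nontrivial central one, which breaks (G \ Z(G)) u {1}.  If G is abelian of
   composite exponent e, the p-power map (p a prime divisor of e) breaks the
   set of elements of order e, together with 1.  Conversely, if G is abelian of
   prime exponent then G is a vector space whose automorphism group acts
   transitively on nonzero vectors, so the only candidates are {1} = w(G) for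
   the empty word and G = w(G) for a single letter. *)

Section WordImages.
Variables (gT : finGroupType) (G : {group gT}).

Lemma weval_in d (g : 'I_d -> gT) (w : fword d) :
  (forall i, g i \in G) -> weval g w \in G.
Proof. by move=> Gg; elim: w => [i||u IHu v IHv|u IHu] /=; rewrite ?groupM ?groupV. Qed.

Lemma eq_weval d (g g' : 'I_d -> gT) (w : fword d) :
  g =1 g' -> weval g w = weval g' w.
Proof. by move=> eq_g; elim: w => [i||u IHu v IHv|u IHu] /=; rewrite ?eq_g ?IHu ?IHv. Qed.

Section Endomorphism.
Variable phi : gT -> gT.
Hypothesis phiM : {in G &, {morph phi : a b / a * b}}.
Hypothesis phiG : {in G, forall a, phi a \in G}.

Lemma morph1_in : phi 1 = 1.
Proof. by apply: (mulgI (phi 1)); rewrite mulg1 -phiM ?mulg1. Qed.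

Lemma morph_weval d (g : 'I_d -> gT) (w : fword d) :
  (forall i, g i \in G) -> phi (weval g w) = weval (phi \o g) w.
Proof.
move=> Gg; elim: w => [i||u IHu v IHv|u IHu] //=.
- exact: morph1_in.
- by rewrite phiM ?weval_in // IHu IHv.
- apply: (mulgI (phi (weval g u))).
  by rewrite -phiM ?groupV ?weval_in // -IHu !mulgV morph1_in.
Qed.

Lemma word_image_morph_closed d (w : fword d) x :
  x \in word_image G w -> phi x \in word_image G w.
Proof.
rewrite !inE => /existsP[g /andP[/forallP Gg /eqP <-]].
apply/existsP; exists [ffun i => phi (g i)]; rewrite (morph_weval _ Gg).
apply/andP; split; first by apply/forallP => i; rewrite ffunE phiG.
by apply/eqP/eq_weval => i; rewrite ffunE.
Qed.

Lemma impostor_setU1 (B : {set gT}) x :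
  B \subset G -> (forall a : {perm gT}, a \in Aut G -> a @: B \subset B) ->
  x \in B -> phi x \notin B -> phi x != 1 ->
  word_image_impostor G (B :|: [set 1]).
Proof.
move=> sBG autB Bx nBphix phix1; split=> [|d _ w]; first split=> [||a Aa].
- by rewrite subUset sBG sub1set group1.
- by rewrite !inE eqxx orbT.
- by rewrite imsetU imset_set1 -(autmE Aa) morph1 autmE setUSS ?autB.
apply/eqP => eBw.
have := word_image_morph_closed (w := w) (x := x); rewrite -eBw !inE Bx => /(_ isT).
by rewrite (negPf nBphix) (negPf phix1).
Qed.

End Endomorphism.

Lemma word_image_FOne : word_image G (FOne 1) = [set 1].
Proof.
apply/setP => x; rewrite !inE; apply/existsP/eqP => [[g /andP[_ /eqP <-]] //|->].
by exists [ffun _ => 1]; rewrite eqxx andbT; apply/forallP => i; rewrite ffunE.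
Qed.

Lemma word_image_FVar : word_image G (FVar (@ord0 0)) = G.
Proof.
apply/setP => x; rewrite inE; apply/existsP/idP => [[g /andP[/forallP Gg /eqP <-]]|Gx].
  exact: Gg.
by exists [ffun _ => x]; rewrite /= ffunE eqxx andbT; apply/forallP => i; rewrite ffunE.
Qed.

End WordImages.

Section RowTransitivity.
Local Open Scope ring_scope.

Lemma unitmx_rV_transitive (F : fieldType) n (u v : 'rV[F]_n) :
  u != 0 -> v != 0 -> exists2 A : 'M[F]_n, A \in unitmx & u *m A = v.
Proof.
(* Gaussian elimination writes a nonzero row u as c *: (e_1 *m U), U invertible. *)
have ebase (w : 'rV[F]_n) : w != 0 ->
    col_ebase w 0 0 != 0 /\ w = col_ebase w 0 0 *: (pid_mx 1 *m row_ebase w).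
  move=> nzw; split; first by have := col_ebase_unit w; rewrite unitmxE det_mx11 unitfE.
  rewrite -{1}(mulmx_ebase w) rank_rV nzw {1}[col_ebase w]mx11_scalar mul_scalar_mx.
  by rewrite scalemxAl.
move=> /ebase[nzcu eu] /ebase[nzcv ev].
exists ((col_ebase v 0 0 / col_ebase u 0 0) *: (invmx (row_ebase u) *m row_ebase v)).
  by rewrite unitmxZ ?unitmx_mul ?unitmx_inv ?row_ebase_unit // unitfE mulf_neq0 ?invr_eq0.
rewrite {1}eu -scalemxAl -scalemxAr scalerA !mulmxA mulmxK ?row_ebase_unit //.
by rewrite mulrC mulfVK.
Qed.

End RowTransitivity.

Lemma abelem_Aut_transitive (gT : finGroupType) p (G : {group gT}) x y :
  p.-abelem G -> x \in G :\ 1 -> y \in G :\ 1 ->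
  exists2 a : {perm gT}, a \in Aut G & a x = y.
Proof.
move=> abelG /setD1P[x1 Gx] /setD1P[y1 Gy].
have ntG : G :!=: 1 by apply/trivgPn; exists x.
pose ErV := abelem_rV abelG ntG; pose rVE := rVabelem abelG ntG.
have ErV_nz z : z \in G -> z != 1 -> (ErV z != 0)%R.
  move=> Gz; apply: contra => /eqP ErVz; apply/eqP.
  by apply: (@abelem_rV_inj _ _ _ abelG ntG _ _ Gz (group1 G)); rewrite abelem_rV_1.
have [A uA xAy] := unitmx_rV_transitive (ErV_nz x Gx x1) (ErV_nz y Gy y1).
pose f z := rVE (ErV z *m A)%R.
have injf : {in G &, injective f}.
  move=> a b Ga Gb /rVabelem_inj /(can_inj (mulmxK uA)).
  exact: abelem_rV_inj.
have sfG : f @: G \subset G by apply/subsetP=> _ /imsetP[z _ ->]; apply: mem_rVabelem.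
exists (perm_in injf sfG).
  rewrite inE perm_in_on; apply/morphicP=> a b Ga Gb.
  by rewrite !perm_inE ?groupM // /f /ErV /rVE abelem_rV_M // mulmxDl rVabelemD.
by rewrite perm_inE // /f xAy /rVE abelem_rV_K.
Qed.

Lemma abelem_word_image_candidate (gT : finGroupType) p (G : {group gT}) A :
  p.-abelem G -> word_image_candidate G A -> A = [set 1] \/ A = G.
Proof.
move=> abelG [sAG A1 autA].
have [sA1 | /subsetPn[x Ax]] := boolP (A \subset [set 1]).
  by left; apply/eqP; rewrite eqEsubset sA1 sub1set.
rewrite inE => x1; right; apply/eqP; rewrite eqEsubset sAG.
apply/subsetP => y Gy; have [-> // | y1] := eqVneq y 1.
have xG1 : x \in G :\ 1 by rewrite !inE x1 (subsetP sAG x Ax).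
have yG1 : y \in G :\ 1 by rewrite !inE y1.
have [a Aa <-] := abelem_Aut_transitive abelG xG1 yG1.
by apply: (subsetP (autA a Aa)); apply: imset_f.
Qed.

Section Impostors.
Variable gT : finGroupType.
Implicit Types (G H K M : {group gT}) (x z : gT).

Lemma Aut_setD_char G H (a : {perm gT}) :
  H \char G -> a \in Aut G -> a @: (G :\: H) \subset G :\: H.
Proof.
move=> /charP[sHG chH] Aa.
have aH : a @: H = H.
  by rewrite -(autmE Aa) -morphimEsub ?chH ?injm_autm ?im_autm.
apply/subsetP => _ /imsetP[t /setDP[Gt nHt] ->].
rewrite inE (Aut_closed Aa Gt) andbT -aH; apply: contra nHt.
by case/imsetP=> u Hu /perm_inj ->.
Qed.

Lemma Aut_order_closed G n (a : {perm gT}) :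
  a \in Aut G -> a @: [set g in G | #[g] == n] \subset [set g in G | #[g] == n].
Proof.
move=> Aa; apply/subsetP => _ /imsetP[t /setIdP[Gt /eqP <-] ->].
by rewrite inE Aut_closed //= -(autmE Aa) order_injm ?injm_autm.
Qed.

Lemma ex_notin_subgroups2 G H K :
  ~~ (G \subset H) -> ~~ (G \subset K) ->
  exists2 x, x \in G & (x \notin H) && (x \notin K).
Proof.
move=> /subsetPn[a Ga nHa] /subsetPn[b Gb nKb].
have [Ka | nKa] := boolP (a \in K); last by exists a => //; apply/andP.
have [Hb | nHb] := boolP (b \in H); last by exists b => //; apply/andP.
exists (a * b); first by rewrite groupM.
by rewrite (groupMr _ Hb) (groupMl _ Ka) nHa.
Qed.

Lemma nil_center_elt_prime G p :
  nilpotent G -> prime p -> p %| #|G| -> exists2 z, z \in 'Z(G) & #[z] = p.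
Proof.
move=> nilG p_pr pG; have [y Gy oy] := Cauchy p_pr pG.
have Op_y : y \in 'O_p(G).
  rewrite (mem_normal_Hall (nilpotent_pcore_Hall p nilG) (pcore_normal p G)) //.
  by rewrite /p_elt oy pnat_id.
have ntOp : 'O_p(G) != 1.
  by apply/trivgPn; exists y; rewrite // -order_eq1 oy gtn_eqF ?prime_gt1.
have ntOpZ := meet_center_nil nilG (pcore_normal p G) ntOp.
have pOpZ : p.-group ('O_p(G) :&: 'Z(G)) := pgroupS (subsetIl _ _) (pcore_pgroup _ _).
have [_ pOpZ_dvd _] := pgroup_pdiv pOpZ ntOpZ.
have [z /setIP[_ Zz] oz] := Cauchy p_pr pOpZ_dvd.
by exists z.
Qed.

Lemma nil_ex_prime_quotient G :
  G :!=: 1 -> nilpotent G ->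
  exists M : {group gT}, [/\ M <| G, ~~ (G \subset M) & prime #|G / M|].
Proof.
move=> ntG nilG; have [M maxM] := ex_maxnormal_ntrivg ntG.
have nsMG := maxnormal_normal maxM.
exists M; split=> //.
  by have := maxnormal_proper maxM; rewrite properE => /andP[].
apply: simple_sol_prime; first exact/quotient_sol/nilpotent_sol.
by rewrite quotient_simple.
Qed.

Lemma ex_morph_prime_quotient G M x z :
  M <| G -> x \in G -> x \notin M -> prime #|G / M| -> #[z] = #|G / M| ->
  exists phi : gT -> gT,
    [/\ {in G &, {morph phi : a b / a * b}}, {in G, forall a, phi a \in <[z]>}
      & phi x = z].
Proof.
move=> /andP[_ nMG] Gx nMx GM_pr oz.
have GMx : coset M x \in G / M by apply: mem_quotient.
have oMx : #[coset M x] = #|G / M|.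
  apply/prime_nt_dvdP; rewrite ?order_dvdG // order_eq1.
  by apply: contra nMx => /eqP/coset_idr->; rewrite ?(subsetP nMG).
have GM_cycle : <[coset M x]> = G / M.
  by apply/eqP; rewrite eqEcard cycle_subG GMx -orderE oMx leqnn.
have z_dvd : #[z] %| #[coset M x] by rewrite oz oMx.
have cycle_coset a : a \in G -> coset M a \in <[coset M x]>.
  by move=> Ga; rewrite GM_cycle mem_quotient.
exists (fun a => eltm z_dvd (coset M a)); split.
- move=> a b Ga Gb /=.
  by rewrite morphM ?(subsetP nMG) // eltmM ?cycle_coset.
- by move=> a /cycle_coset/cycleP[k ->]; rewrite eltmE mem_cycle.
by rewrite eltm_id.
Qed.

Lemma nonabelian_nil_impostor G :
  G :!=: 1 -> nilpotent G -> ~~ abelian G -> exists A, word_image_impostor G A.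
Proof.
move=> ntG nilG nabG.
have [M [nsMG nsGM GM_pr]] := nil_ex_prime_quotient ntG nilG.
have GM_dvd : #|G / M| %| #|G| by rewrite card_quotient ?normal_norm ?dvdn_indexg.
have [z Zz oz] := nil_center_elt_prime nilG GM_pr GM_dvd.
have nsGZ : ~~ (G \subset 'Z(G)).
  by apply: contra nabG => sGZ; apply: subset_trans sGZ (subsetIr _ _).
have [x Gx /andP[nMx nZx]] := ex_notin_subgroups2 nsGM nsGZ.
have [phi [phiM phi_z phix]] := ex_morph_prime_quotient nsMG Gx nMx GM_pr oz.
have phiG a : a \in G -> phi a \in G.
  by move/phi_z; apply/subsetP; rewrite cycle_subG (subsetP (center_sub G)).
exists ((G :\: 'Z(G)) :|: [set 1]); apply: (impostor_setU1 phiM phiG (x := x)).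
- exact: subsetDl.
- by move=> a /(Aut_setD_char (center_char G)).
- by rewrite inE nZx.
- by rewrite phix inE Zz.
by rewrite phix -order_eq1 oz gtn_eqF ?prime_gt1.
Qed.

Lemma abelian_composite_exponent_impostor G :
  G :!=: 1 -> abelian G -> ~~ prime (exponent G) ->
  exists A, word_image_impostor G A.
Proof.
move=> ntG abG e_npr; have [x Gx ox] := exponent_witness (abelian_nil abG).
have x_gt1 : 1 < #[x].
  by rewrite -ox ltn_neqAle exponent_gt0 andbT eq_sym -dvdn1 -trivg_exponent.
have p_pr := pdiv_prime x_gt1; set p := pdiv #[x] in p_pr.
have oxp : #[x ^+ p] = #[x] %/ p by rewrite orderXdiv ?pdiv_dvd.
have oxp1 : #[x] %/ p != 1%N.
  by apply: contra e_npr => /eqP xp1; rewrite ox -{1}(divnK (pdiv_dvd #[x])) xp1 mul1n.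
have phiM : {in G &, {morph (fun a => a ^+ p) : a b / a * b}}.
  by move=> a b Ga Gb; apply/expgMn/(centsP abG).
have phiG a : a \in G -> a ^+ p \in G by move/groupX.
exists ([set g in G | #[g] == #[x]] :|: [set 1]).
apply: (impostor_setU1 phiM phiG (x := x)).
- by apply/subsetP => g /setIdP[].
- exact: Aut_order_closed.
- by rewrite inE Gx eqxx.
- by rewrite inE groupX // oxp neq_ltn ltn_Pdiv ?prime_gt1 ?orbT.
by rewrite -order_eq1 oxp.
Qed.

End Impostors.

Theorem theorem3p2 (gT : finGroupType) (G : {group gT}) :
  G :!=: 1%g -> nilpotent G ->
  ((~ exists A : {set gT}, word_image_impostor G A) <->
   (abelian G /\ prime (exponent G))).
Proof.
move=> ntG nilG; split.
  move=> no_impostor; have abG : abelian G.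
    by apply/negPn/negP => /(nonabelian_nil_impostor ntG nilG).
  split=> //; apply/negPn/negP => /(abelian_composite_exponent_impostor ntG abG).
  exact: no_impostor.
case=> abG e_pr [A [candA impA]].
have abelG : (exponent G).-abelem G by rewrite abelemE // abG dvdnn.
have [A1|AG] := abelem_word_image_candidate abelG candA.
  by have /eqP[] := impA 1%N isT (FOne 1); rewrite A1 word_image_FOne.
by have /eqP[] := impA 1%N isT (FVar ord0); rewrite AG word_image_FVar.
Qed.
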